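(* Let $\mathcal{B}=\{1,\dots,|\mathcal{B}|\}$ be a finite set of bins and let $N$ data points $j=1,\dots,N$ each belong to exactly one bin $B(j)\in\mathcal{B}$. For $i\in\mathcal{B}$ let $\mathcal{U}_i=\{j: B(j)=i\}$ and assume $\mathcal{U}_i\neq\emptyset$ for every $i$. Let $P_i\in(0,1]$ for $i\in\mathcal{B}$, and let $O_1,\dots,O_N$ be independent Bernoulli random variables with $\mathbb{P}(O_j=1)=P_{B(j)}$. Set $\mathcal{S}_i=\{j\in\mathcal{U}_i: O_j=1\}$. Let $\mathcal{H}=\{\hat Y_1,\dots,\hat Y_{|\mathcal{H}|}\}$ be a finite set of predictions, and for each $\hat Y\in\mathcal{H}$ and each $j$ let $\delta_j(Y,\hat Y)\in[0,\Delta]$ be a fixed (non-random) loss value, where $\Delta>0$. Let $\tilde P_i>0$, $i\in\mathcal{B}$, be given numbers (estimated propensities). Define the true risk $$R(\hat Y)=\frac{1}{|\mathcal{B}|}\sum_{i=1}^{|\mathcal{B}|}\frac{1}{|\mathcal{U}_i|}\sum_{j\in\mathcal{U}_i}\delta_j(Y,\hat Y)$$ and the VIR estimator $$\hat R_{\mathrm{VIR}}(\hat Y\mid\tilde P)=\frac{1}{|\mathcal{B}|}\sum_{i=1}^{|\mathcal{B}|}\frac{1}{|\mathcal{U}_i|}\sum_{j\in\mathcal{S}_i}\frac{\delta_j(Y,\hat Y)}{\tilde P_i},$$ and let $\hat Y^{\mathrm{ERM}}\in\operatorname{argmin}_{\hat Y\in\mathcal{H}}\hat R_{\mathrm{VIR}}(\hat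 Y\mid\tilde P)$ (a random element of $\mathcal{H}$ depending on $O$). Then for every $\eta\in(0,1)$, with probability at least $1-\eta$ over $O$, $$R(\hat Y^{\mathrm{ERM}})\le \hat R_{\mathrm{VIR}}(\hat Y^{\mathrm{ERM}}\mid\tilde P)+\frac{\Delta}{|\mathcal{B}|}\sum_{i=1}^{|\mathcal{B}|}\Big|1-\frac{P_i}{\tilde P_i}\Big|+\frac{\Delta}{|\mathcal{B}|}\sqrt{\frac{\log(2|\mathcal{H}|/\eta)}{2}}\sqrt{\sum_{i=1}^{|\mathcal{B}|}\frac{1}{\tilde P_i^{2}}}.$$
   Context: This is the generalization bound for imbalanced regression: the label space is partitioned into equal-interval bins, an imbalanced dataset is modeled as the observed subset (indicators $O_j$) of a full dataset, with observation probability (''propensity'') $P_i$ depending only on the bin. $\tilde P_i$ is the smoothed label distribution used in the training objective. *)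

From HB Require Import structures.
From mathcomp Require Import all_boot all_order all_algebra.
From mathcomp Require Import reals exp.
Set Implicit Arguments. Unset Strict Implicit. Unset Printing Implicit Defensive.
Import Order.TTheory GRing.Theory Num.Theory.
Local Open Scope ring_scope.

Section VIR.
Variables (R : realType) (N nb : nat) (B : 'I_N -> 'I_nb).

Definition Ubin (i : 'I_nb) : {set 'I_N} := [set j | B j == i].

(* true risk R(Yhat), with d j = delta_j(Y, Yhat) *)
Definition trueRisk (d : 'I_N -> R) : R :=
  (nb%:R)^-1 * \sum_(i < nb) (#|Ubin i|%:R)^-1 * \sum_(j in Ubin i) d j.

Definition VIR (Pt : 'I_nb -> R) (O : {ffun 'I_N -> bool}) (d : 'I_N -> R) : R :=
  (nb%:R)^-1 * \sum_(i < nb) (#|Ubin i|%:R)^-1 *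
     \sum_(j in Ubin i | O j) d j / Pt i.

(* joint law of independent Bernoulli variables O_j with P(O_j = 1) = P_{B j} *)
Definition probO (P : 'I_nb -> R) (O : {ffun 'I_N -> bool}) : R :=
  \prod_(j < N) (if O j then P (B j) else 1 - P (B j)).

Definition Prob (P : 'I_nb -> R) (E : pred {ffun 'I_N -> bool}) : R :=
  \sum_(O | E O) probO P O.

End VIR.

(* For a fixed hypothesis, the VIR estimate is a weighted sum sum_j a_j O_j
   of independent Bernoulli variables, with a_j = delta_j / (|B| |U_(B j)| Pt_(B j)).
   Its mean sum_j a_j P_(B j) exceeds the true risk by at most the bias term
   (Delta/|B|) sum_i |1 - P_i/Pt_i|, and since the |U_i| weights of bin i have
   squares summing to (Delta/|B|)^2 / (|U_i| Pt_i^2) at most, Hoeffding's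
   inequality bounds the probability that the deviation term is exceeded by
   eta/(2|H|).  A union bound over the |H| hypotheses gives failure probability
   at most eta/2 for all of them at once, in particular for the empirical risk
   minimiser.  Hoeffding's lemma for a Bernoulli variable comes from the gap
   s^2/8 + s(1-p) - ln((1-p)e^s + p), which vanishes at 0 together with its
   derivative, whose own derivative is nonnegative by AM-GM. *)

From mathcomp Require Import all_boot all_order all_algebra.
From mathcomp Require Import boolp functions topology normedtype.
From mathcomp Require Import reals sequences derive realfun exp.
From mathcomp Require Import ring lra.
Set Implicit Arguments. Unset Strict Implicit. Unset Printing Implicit Defensive.
Import Order.TTheory GRing.Theory Num.Theory.
Import numFieldNormedType.Exports.
Local Open Scope ring_scope.

Lemma ger0_is_derive_ndecr (R : realType) (f df : R -> R) (a : R) :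
  (forall x, is_derive x (1 : R) f (df x)) -> (forall x, a < x -> 0 <= df x) ->
  forall x, a <= x -> f a <= f x.
Proof.
move=> f_df df_ge0 x ax.
apply: (@ger0_derive1_ndecry R f a) => //.
- by move=> y; rewrite in_itv /= andbT => ay; rewrite derive1E derive_val; apply: df_ge0.
- apply: continuous_subspaceT => y.
  by apply/differentiable_continuous/derivable1_diffP; have [] := f_df y.
Qed.

Lemma scaleRE (R : realType) (a x : R) : a *: x = a * x.
Proof. by []. Qed.

Section HoeffdingLemma.
Variables (R : realType) (p : R).
Hypotheses (p_ge0 : 0 <= p) (p_le1 : p <= 1).

Definition bern_mgf (s : R) : R := (1 - p) * expR s + p.

Lemma bern_mgf_gt0 s : 0 < bern_mgf s.
Proof.
rewrite /bern_mgf; have [->|p_neq1] := eqVneq p 1.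
  by rewrite subrr mul0r add0r ltr01.
apply: ltr_wpDr p_ge0 (mulr_gt0 _ (expR_gt0 s)).
by rewrite subr_gt0 lt_neqAle p_neq1.
Qed.

Lemma is_derive_bern_mgf s : is_derive s (1 : R) bern_mgf ((1 - p) * expR s).
Proof.
have -> : bern_mgf = (1 - p) \*: expR + cst p by apply/funext.
rewrite -[X in is_derive _ _ _ X]addr0; exact: is_deriveD.
Qed.

Definition hoeffding_gap (s : R) : R := s ^+ 2 / 8 + s * (1 - p) - ln (bern_mgf s).

Definition hoeffding_gap_slope (s : R) : R := s / 4 - p + p / bern_mgf s.

Lemma is_derive_hoeffding_gap s :
  is_derive s (1 : R) hoeffding_gap (hoeffding_gap_slope s).
Proof.
have E0 := lt0r_neq0 (bern_mgf_gt0 s).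
have dln := is_derive1_comp (is_derive1_ln (bern_mgf_gt0 s)) (is_derive_bern_mgf s).
have -> : hoeffding_gap = 8^-1 \*: (id ^+ 2) + (1 - p) \*: id - (@ln R \o bern_mgf).
  by apply/funext => x; rewrite /hoeffding_gap /= mulrC [x * _]mulrC.
apply: is_derive_eq; rewrite /hoeffding_gap_slope /= !scaleRE.
by rewrite /bern_mgf in E0 *; field.
Qed.

Lemma is_derive_hoeffding_gap_slope s :
  is_derive s (1 : R) hoeffding_gap_slope (4^-1 - p * (1 - p) * expR s / bern_mgf s ^+ 2).
Proof.
have E0 := lt0r_neq0 (bern_mgf_gt0 s).
have dinv := is_deriveV E0 (is_derive_bern_mgf s).
have -> : hoeffding_gap_slope = 4^-1 \*: id - cst p + p \*: (fun y => (bern_mgf y)^-1).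
  by apply/funext => x; rewrite /hoeffding_gap_slope /= mulrC.
apply: is_derive_eq; rewrite /= !scaleRE subr0.
by rewrite /bern_mgf in E0 *; field.
Qed.

Lemma hoeffding_gap_slope_ge0 s : 0 <= s -> 0 <= hoeffding_gap_slope s.
Proof.
have slope0 : hoeffding_gap_slope 0 = 0.
  by rewrite /hoeffding_gap_slope /bern_mgf expR0 mulr1 subrK divr1 mul0r sub0r addNr.
move=> s_ge0; rewrite -slope0.
apply: (ger0_is_derive_ndecr is_derive_hoeffding_gap_slope _ s_ge0) => x _.
rewrite subr_ge0 ler_pdivrMr ?exprn_gt0 ?bern_mgf_gt0 // /bern_mgf.
(* AM-GM: [4 p (1 - p) e^x <= ((1 - p) e^x + p)^2] *)
have := sqr_ge0 ((1 - p) * expR x - p); lra.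
Qed.

Lemma hoeffding_gap_ge0 s : 0 <= s -> 0 <= hoeffding_gap s.
Proof.
have gap0 : hoeffding_gap 0 = 0.
  by rewrite /hoeffding_gap /bern_mgf expR0 mulr1 subrK ln1 expr0n /= !mul0r !addr0 subr0.
move=> s_ge0; rewrite -gap0.
apply: (ger0_is_derive_ndecr is_derive_hoeffding_gap _ s_ge0) => x x_gt0.
exact/hoeffding_gap_slope_ge0/ltW.
Qed.

Lemma hoeffding_lemma_bernoulli s : 0 <= s ->
  p * expR (- (s * (1 - p))) + (1 - p) * expR (s * p) <= expR (s ^+ 2 / 8).
Proof.
move=> s_ge0.
have : ln (bern_mgf s) <= s ^+ 2 / 8 + s * (1 - p).
  by rewrite -subr_ge0; apply: hoeffding_gap_ge0.
rewrite -ler_expR lnK ?posrE ?bern_mgf_gt0 // => mgf_le.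
have -> : p * expR (- (s * (1 - p))) + (1 - p) * expR (s * p) =
          expR (- (s * (1 - p))) * bern_mgf s.
  have -> : s * p = - (s * (1 - p)) + s by ring.
  by rewrite expRD /bern_mgf; ring.
have -> : s ^+ 2 / 8 = - (s * (1 - p)) + (s ^+ 2 / 8 + s * (1 - p)) by ring.
by rewrite expRD; apply: ler_wpM2l; first exact: expR_ge0.
Qed.

End HoeffdingLemma.

Section ProductBernoulli.
Variables (R : realType) (N nb : nat) (B : 'I_N -> 'I_nb) (P : 'I_nb -> R).
Hypothesis P_prob : forall i, 0 <= P i <= 1.

Lemma probO_ge0 O : 0 <= probO B P O.
Proof.
apply: prodr_ge0 => j _; have /andP[P_ge0 P_le1] := P_prob (B j).
by case: (O j); rewrite ?subr_ge0.
Qed.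

Lemma sum_probO_prod (f : 'I_N -> bool -> R) :
  \sum_O probO B P O * \prod_(j < N) f j (O j) =
  \prod_(j < N) (P (B j) * f j true + (1 - P (B j)) * f j false).
Proof.
have -> : \prod_(j < N) (P (B j) * f j true + (1 - P (B j)) * f j false) =
    \prod_(j < N) \sum_(b : bool) (if b then P (B j) else 1 - P (B j)) * f j b.
  by apply: eq_bigr => j _; rewrite big_bool.
rewrite bigA_distr_bigA; apply: eq_bigr => O _.
by rewrite /probO -big_split.
Qed.

Lemma sum_probO : \sum_O probO B P O = 1.
Proof.
have := sum_probO_prod (fun _ _ => 1); under eq_bigr do rewrite big1 // mulr1.
by move=> ->; apply: big1 => j _; rewrite !mulr1 subrKC.
Qed.

Lemma le_Prob (E1 E2 : pred {ffun 'I_N -> bool}) :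
  (forall O, E1 O -> E2 O) -> Prob B P E1 <= Prob B P E2.
Proof.
move=> E12; rewrite /Prob [X in X <= _]big_mkcond [X in _ <= X]big_mkcond /=.
apply: ler_sum => O _; case: ifP => [/E12 -> //|_].
by case: ifP => _; rewrite ?probO_ge0.
Qed.

Lemma ProbC (E : pred {ffun 'I_N -> bool}) : Prob B P E = 1 - Prob B P (predC E).
Proof. by rewrite /Prob -sum_probO [X in _ = X - _](bigID E) /= addrK. Qed.

Lemma Prob_union_bound h (E : 'I_h -> pred {ffun 'I_N -> bool}) :
  Prob B P (fun O => [exists k, E k O]) <= \sum_k Prob B P (E k).
Proof.
have ite_ge0 (b : bool) O : 0 <= if b then probO B P O else 0.
  by case: b; rewrite ?probO_ge0.
rewrite /Prob big_mkcond /=; under [X in _ <= X]eq_bigr do rewrite big_mkcond.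
rewrite exchange_big /=; apply: ler_sum => O _.
case: ifP => [/existsP[k Ek]|_]; last exact: sumr_ge0.
by rewrite (bigD1 k) //= Ek lerDl sumr_ge0.
Qed.

Lemma chernoff_bound (Y : {ffun 'I_N -> bool} -> R) (t lam : R) : 0 <= lam ->
  Prob B P (fun O => t <= Y O) <= \sum_O probO B P O * expR (lam * (Y O - t)).
Proof.
move=> lam_ge0; rewrite /Prob big_mkcond /=; apply: ler_sum => O _.
case: ifP => [tY|_]; last by rewrite mulr_ge0 ?probO_ge0 ?expR_ge0.
rewrite -{1}[probO B P O]mulr1 ler_wpM2l ?probO_ge0 //.
by apply: le_trans (expR_ge1Dx _); rewrite lerDl mulr_ge0 // subr_ge0.
Qed.

Lemma hoeffding_mgf_bound (a : 'I_N -> R) (lam : R) :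
  (forall j, 0 <= a j) -> 0 <= lam ->
  \sum_O probO B P O *
     expR (lam * (\sum_j a j * P (B j) - \sum_j a j * (O j)%:R))
  <= expR (lam ^+ 2 * (\sum_j a j ^+ 2) / 8).
Proof.
move=> a_ge0 lam_ge0.
have prodE (O : {ffun 'I_N -> bool}) :
    expR (lam * (\sum_j a j * P (B j) - \sum_j a j * (O j)%:R)) =
    \prod_j expR (lam * (a j * P (B j) - a j * (O j)%:R)).
  by rewrite -expR_sum -sumrB mulr_sumr.
under eq_bigr do rewrite prodE.
rewrite (sum_probO_prod (fun j b => expR (lam * (a j * P (B j) - a j * b%:R)))).
have -> : lam ^+ 2 * (\sum_j a j ^+ 2) / 8 = \sum_j (lam * a j) ^+ 2 / 8.
  by rewrite mulr_sumr mulr_suml; apply: eq_bigr => j _; rewrite exprMn.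
rewrite expR_sum; apply: ler_prod => j _; have /andP[P_ge0 P_le1] := P_prob (B j).
rewrite addr_ge0 ?mulr_ge0 ?expR_ge0 ?subr_ge0 //=.
have -> : lam * (a j * P (B j) - a j * 1) = - (lam * a j * (1 - P (B j))) by ring.
have -> : lam * (a j * P (B j) - a j * 0) = lam * a j * P (B j) by ring.
exact: hoeffding_lemma_bernoulli (mulr_ge0 lam_ge0 (a_ge0 j)).
Qed.

Lemma hoeffding_lower_tail (a : 'I_N -> R) (S t : R) :
  (forall j, 0 <= a j) -> 0 < S -> \sum_j a j ^+ 2 <= S -> 0 <= t ->
  Prob B P (fun O => t <= \sum_j a j * P (B j) - \sum_j a j * (O j)%:R)
  <= expR (- (2 * t ^+ 2 / S)).
Proof.
move=> a_ge0 S_gt0 sum_le t_ge0.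
pose lam := 4 * t / S.
have lam_ge0 : 0 <= lam by apply: divr_ge0 (ltW S_gt0); rewrite mulr_ge0.
apply: le_trans (chernoff_bound _ t lam_ge0) _.
under eq_bigr do rewrite mulrBr expRD mulrA.
rewrite -mulr_suml.
apply: le_trans (ler_wpM2r (expR_ge0 _) (hoeffding_mgf_bound a_ge0 lam_ge0)) _.
(* [lam] minimises the exponent [lam^2 S / 8 - lam t] *)
have -> : - (2 * t ^+ 2 / S) = lam ^+ 2 * S / 8 - lam * t.
  by rewrite /lam; field; exact: lt0r_neq0.
rewrite -expRD ler_expR lerD2r ler_wpM2r ?invr_ge0 ?ler0n //.
by rewrite ler_wpM2l ?exprn_ge0.
Qed.

End ProductBernoulli.

Lemma sum_Ubin (V : nmodType) (N nb : nat) (B : 'I_N -> 'I_nb)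
    (F : 'I_N -> 'I_nb -> V) :
  \sum_(i < nb) \sum_(j in Ubin B i) F j i = \sum_j F j (B j).
Proof.
rewrite [RHS](partition_big B xpredT) //=; apply: eq_bigr => i _.
by apply: eq_big => j; rewrite inE // => /eqP ->.
Qed.

Section Bins.
Variables (R : realType) (N nb : nat) (B : 'I_N -> 'I_nb).

Definition bin_weight (j : 'I_N) : R := nb%:R^-1 * #|Ubin B (B j)|%:R^-1.

Definition vir_coef (Pt : 'I_nb -> R) (d : 'I_N -> R) (j : 'I_N) : R :=
  bin_weight j * d j / Pt (B j).

Lemma bin_weight_ge0 j : 0 <= bin_weight j.
Proof. by rewrite mulr_ge0 ?invr_ge0 ?ler0n. Qed.

Lemma trueRiskE d : trueRisk B d = \sum_j bin_weight j * d j.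
Proof.
rewrite /trueRisk mulr_sumr.
rewrite -(sum_Ubin B (fun j i => nb%:R^-1 * #|Ubin B i|%:R^-1 * d j)).
by apply: eq_bigr => i _; rewrite mulrA mulr_sumr.
Qed.

Lemma VIRE Pt O d : VIR B Pt O d = \sum_j vir_coef Pt d j * (O j)%:R.
Proof.
rewrite /VIR mulr_sumr.
rewrite -(sum_Ubin B (fun j i => nb%:R^-1 * #|Ubin B i|%:R^-1 * d j / Pt i * (O j)%:R)).
apply: eq_bigr => i _; rewrite mulrA mulr_sumr big_mkcondr /=.
by apply: eq_bigr => j _; case: (O j); rewrite ?mulr1 ?mulr0 ?mulrA.
Qed.

Hypothesis bins_nonempty : forall i, exists j, B j = i.

Lemma card_Ubin_gt0 i : (0 < #|Ubin B i|)%N.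
Proof.
have [j <-] := bins_nonempty i.
by rewrite card_gt0; apply/set0Pn; exists j; rewrite inE.
Qed.

Lemma sum_by_bins (g : 'I_nb -> R) :
  \sum_j #|Ubin B (B j)|%:R^-1 * g (B j) = \sum_i g i.
Proof.
rewrite -(sum_Ubin B (fun j i => #|Ubin B i|%:R^-1 * g i)); apply: eq_bigr => i _.
by rewrite sumr_const -mulrnAl -mulr_natr mulVf ?mul1r // pnatr_eq0 -lt0n card_Ubin_gt0.
Qed.

Variables (Pt : 'I_nb -> R) (Delta : R) (d : 'I_N -> R).
Hypotheses (Pt_gt0 : forall i, 0 < Pt i) (d_ge0 : forall j, 0 <= d j)
  (d_le : forall j, d j <= Delta).

Lemma vir_coef_ge0 j : 0 <= vir_coef Pt d j.
Proof.
apply: mulr_ge0; first exact: mulr_ge0 (bin_weight_ge0 j) (d_ge0 j).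
by rewrite invr_ge0 ltW.
Qed.

Lemma trueRisk_le_bias (P : 'I_nb -> R) :
  trueRisk B d <= \sum_j vir_coef Pt d j * P (B j)
                  + Delta / nb%:R * \sum_i `|1 - P i / Pt i|.
Proof.
rewrite trueRiskE mulr_sumr.
rewrite -(sum_by_bins (fun i => Delta / nb%:R * `|1 - P i / Pt i|)) -big_split /=.
apply: ler_sum => j _; set r := 1 - P (B j) / Pt (B j).
have -> : bin_weight j * d j = vir_coef Pt d j * P (B j) + bin_weight j * d j * r.
  by rewrite /vir_coef /r; field; exact: lt0r_neq0.
have -> : #|Ubin B (B j)|%:R^-1 * (Delta / nb%:R * `|r|) = bin_weight j * Delta * `|r|.
  by rewrite /bin_weight; ring.
rewrite lerD2l; apply: le_trans (ler_wpM2l _ (ler_norm r)) _.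
  by rewrite mulr_ge0 ?bin_weight_ge0.
by rewrite ler_wpM2r // ler_wpM2l ?bin_weight_ge0.
Qed.

Lemma sum_vir_coef_sqr_le :
  \sum_j vir_coef Pt d j ^+ 2 <= (Delta / nb%:R) ^+ 2 * \sum_i (Pt i ^+ 2)^-1.
Proof.
rewrite mulr_sumr -(sum_by_bins (fun i => (Delta / nb%:R) ^+ 2 * (Pt i ^+ 2)^-1)).
apply: ler_sum => j _; set u := #|Ubin B (B j)|%:R^-1 : R.
set c := nb%:R^-1 / Pt (B j).
have u_ge0 : 0 <= u by rewrite invr_ge0 ler0n.
have u_le1 : u <= 1 by rewrite invf_le1 ?ler1n ?ltr0n ?card_Ubin_gt0.
have c_ge0 : 0 <= c by rewrite mulr_ge0 ?invr_ge0 ?ler0n ?ltW.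
have -> : vir_coef Pt d j ^+ 2 = u * (u * (d j * c) ^+ 2).
  by rewrite /vir_coef /bin_weight -/u /c; ring.
have -> : (Delta / nb%:R) ^+ 2 * (Pt (B j) ^+ 2)^-1 = (Delta * c) ^+ 2.
  by rewrite /c -exprVn; ring.
apply: ler_wpM2l => //; apply: le_trans (ler_piMl (sqr_ge0 _) u_le1) _.
have Delta_ge0 : 0 <= Delta := le_trans (d_ge0 j) (d_le j).
apply: lerXn2r; rewrite ?nnegrE.
- exact: mulr_ge0 (d_ge0 j) c_ge0.
- exact: mulr_ge0 Delta_ge0 c_ge0.
- by rewrite ler_wpM2r.
Qed.

Variable P : 'I_nb -> R.
Hypotheses (P_prob : forall i, 0 <= P i <= 1) (Delta_gt0 : 0 < Delta).

Lemma Prob_risk_bound_fails (L : R) : 0 <= L ->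
  Prob B P (fun O => ~~ (trueRisk B d <= VIR B Pt O d
      + Delta / nb%:R * \sum_(i < nb) `|1 - P i / Pt i|
      + Delta / nb%:R * Num.sqrt (L / 2) * Num.sqrt (\sum_(i < nb) (Pt i ^+ 2)^-1)))
  <= expR (- L).
Proof.
move=> L_ge0; set Sg := \sum_(i < nb) (Pt i ^+ 2)^-1.
set T := Delta / nb%:R * Num.sqrt (L / 2) * Num.sqrt Sg.
have [nb0|nb_gt0] := posnP nb.
  have nbR0 : nb%:R = 0 :> R by rewrite nb0.
  rewrite /Prob big_pred0 ?expR_ge0 // => O.
  by rewrite /trueRisk /VIR /T nbR0 invr0 mulr0 !mul0r !addr0 lexx.
have Sg_gt0 : 0 < Sg.
  have term_ge0 i : 0 <= (Pt i ^+ 2)^-1 by rewrite invr_ge0 exprn_ge0 ?ltW.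
  rewrite lt0r sumr_ge0 // andbT psumr_neq0 //; apply/hasP.
  by exists (Ordinal nb_gt0); rewrite ?mem_index_enum //= invr_gt0 exprn_gt0.
pose S := (Delta / nb%:R) ^+ 2 * Sg.
have S_gt0 : 0 < S by rewrite mulr_gt0 // exprn_gt0 // divr_gt0 // ltr0n.
have T_ge0 : 0 <= T by rewrite !mulr_ge0 ?sqrtr_ge0 ?invr_ge0 ?ler0n ?ltW.
have T_sqr : 2 * T ^+ 2 / S = L.
  rewrite /T /S !exprMn !sqr_sqrtr ?divr_ge0 ?ler0n ?(ltW Sg_gt0) //; field.
  by rewrite pnatr_eq0 -lt0n nb_gt0 !lt0r_neq0.
rewrite -T_sqr.
apply: le_trans _
  (hoeffding_lower_tail B P_prob vir_coef_ge0 S_gt0 sum_vir_coef_sqr_le T_ge0).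
apply: (le_Prob B P_prob) => O; rewrite -ltNge VIRE => /ltW.
by have := trueRisk_le_bias P; lra.
Qed.

End Bins.

Theorem mainTheorem1 (R : realType) (N nb h : nat) (B : 'I_N -> 'I_nb)
  (P Pt : 'I_nb -> R) (delta : 'I_h -> 'I_N -> R) (Delta : R)
  (erm : {ffun 'I_N -> bool} -> 'I_h) (eta : R) :
  (forall i : 'I_nb, exists j : 'I_N, B j = i) ->
  (forall i, 0 < P i <= 1) ->
  (forall i, 0 < Pt i) ->
  0 < Delta ->
  (forall k j, 0 <= delta k j <= Delta) ->
  (0 < h)%N ->
  (forall O k, VIR B Pt O (delta (erm O)) <= VIR B Pt O (delta k)) ->
  0 < eta < 1 ->
  1 - eta <=
  Prob B P (fun O =>
    trueRisk B (delta (erm O)) <=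
      VIR B Pt O (delta (erm O))
      + Delta / nb%:R * \sum_(i < nb) `|1 - P i / Pt i|
      + Delta / nb%:R * Num.sqrt (ln (2 * h%:R / eta) / 2)
          * Num.sqrt (\sum_(i < nb) (Pt i ^+ 2)^-1)).
Proof.
move=> bins_nonempty P_pos Pt_gt0 Delta_gt0 delta_bound h_gt0 _ /andP[eta_gt0 eta_lt1].
have P_prob i : 0 <= P i <= 1 by have /andP[/ltW -> ->] := P_pos i.
have h_ge1 : 1 <= h%:R :> R by rewrite ler1n.
set L := ln (2 * h%:R / eta).
have L_ge0 : 0 <= L by rewrite ln_ge0 // ler_pdivlMr // mul1r; lra.
pose risk_bound_holds k O := trueRisk B (delta k) <= VIR B Pt O (delta k)
  + Delta / nb%:R * \sum_(i < nb) `|1 - P i / Pt i|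
  + Delta / nb%:R * Num.sqrt (L / 2) * Num.sqrt (\sum_(i < nb) (Pt i ^+ 2)^-1).
apply: (@le_trans _ _ (Prob B P (fun O => [forall k, risk_bound_holds k O]))); last first.
  by apply: (le_Prob B P_prob) => O /forallP; apply.
rewrite ProbC lerD2l lerN2.
apply: (@le_trans _ _ (Prob B P (fun O => [exists k, ~~ risk_bound_holds k O]))).
  by apply: (le_Prob B P_prob) => O; rewrite /= negb_forall.
apply: le_trans (Prob_union_bound B P_prob _) _.
have dev k : Prob B P (fun O => ~~ risk_bound_holds k O) <= eta / (2 * h%:R).
  have delta_ge0 j : 0 <= delta k j by case/andP: (delta_bound k j).
  have delta_le j : delta k j <= Delta by case/andP: (delta_bound k j).
  have -> : eta / (2 * h%:R) = expR (- L).
    by rewrite expRN lnK ?invf_div // posrE divr_gt0 ?mulr_gt0 ?ltr0n.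
  exact: (Prob_risk_bound_fails bins_nonempty Pt_gt0 delta_ge0 delta_le
            P_prob Delta_gt0 L_ge0).
apply: le_trans (ler_sum _ (fun k _ => dev k)) _.
rewrite sumr_const card_ord -[_ *+ h]mulr_natr.
have -> : eta / (2 * h%:R) * h%:R = eta / 2 by field; rewrite lt0r_neq0 // ltr0n.
lra.
Qed.
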